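(* Let $\Pi$ be a finite simply laced diagram with labelling $\sigma:I\to V$ and let $\widetilde{\mathcal A}$ be a continuous $\mathrm{Spin}(2)$-amalgam with respect to $\Pi$ and $\sigma$. Then $\widetilde{\mathcal A}$ is isomorphic to the standard $\mathrm{Spin}(2)$-amalgam $\mathcal A(\Pi,\sigma,\mathrm{Spin}(2))$.
   Context: $\mathrm{Spin}(m)$ lives in the real Clifford algebra with $e_k^2=-1$, $e_ke_l=-e_le_k$; $\mathrm{Spin}(2)=\{\cos\alpha+\sin\alpha\,e_1e_2\}$; $\widetilde\varepsilon_{12},\widetilde\varepsilon_{23}:\mathrm{Spin}(2)\to\mathrm{Spin}(3)$ are $a+be_1e_2\mapsto a+be_1e_2$ and $a+be_1e_2\mapsto a+be_2e_3$; $\widetilde\iota_1(x)=(x,1)$, $\widetilde\iota_2(x)=(1,x)$ into $\mathrm{Spin}(2)\times\mathrm{Spin}(2)$. A $\mathrm{Spin}(2)$-amalgam with respect to $\Pi$ and $\sigma$ is a family of groups $G_{ij}$ ($i\ne j\in I$) with monomorphisms $\phi^i_{ij}:\mathrm{Spin}(2)\to G_{ij}$, where $G_{ij}=\mathrm{Spin}(3)$ if $\{i^\sigma,j^\sigma\}$ is an edge of $\Pi$ and $G_{ij}=\mathrm{Spin}(2)\times\mathrm{Spin}(2)$ otherwise, and for $i<j$ the images satisfy $\phi^i_{ij}(\mathrm{Spin}(2))=\widetilde\varepsilon_{12}(\mathrm{Spin}(2))$, $\phi^j_{ij}(\mathrm{Spin}(2))=\widetilde\varepsilon_{23}(\mathrm{Spin}(2))$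 (edge) resp. $=\widetilde\iota_1(\mathrm{Spin}(2)),\widetilde\iota_2(\mathrm{Spin}(2))$ (non-edge). It is continuous if all $\phi^i_{ij}$ are continuous. The standard one has $\phi^i_{ij}=\widetilde\varepsilon_{12},\phi^j_{ij}=\widetilde\varepsilon_{23}$ resp. $\widetilde\iota_1,\widetilde\iota_2$ for $i<j$. An isomorphism of amalgams is a permutation $\pi$ of $I$ with group isomorphisms $\alpha_{ij}:G_{ij}\to H_{\pi(i)\pi(j)}$ satisfying $\alpha_{ij}\circ\phi^i_{ij}=\psi^{\pi(i)}_{\pi(i)\pi(j)}$. *)

From Stdlib Require Import Reals Arith.
Open Scope R_scope.

(* Spin(2) inside the real Clifford algebra of R^2 (e_k^2 = -1,
   e_k e_l = - e_l e_k).  The pair (a,b) stands for a + b e1e2.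
   Since (e1e2)^2 = -1, the Clifford product is
   (a + b e1e2)(c + d e1e2) = (ac - bd) + (ad + bc) e1e2.
   Spin(2) = { cos t + sin t e1e2 } = { a + b e1e2 | a^2 + b^2 = 1 }.   *)
Definition C2 : Type := (R * R)%type.
Definition c2mul (x y : C2) : C2 :=
  (fst x * fst y - snd x * snd y, fst x * snd y + snd x * fst y).
Definition inSpin2 (x : C2) : Prop := fst x * fst x + snd x * snd x = 1.
Definition c2one : C2 := (1, 0).
Definition c2dist (x y : C2) : R := Rabs (fst x - fst y) + Rabs (snd x - snd y).

(* Even part of the real Clifford algebra of R^3:
   a + x e1e2 + y e2e3 + z e3e1.  The multiplication table follows from
   e_k^2 = -1 and anticommutation:  (e1e2)^2 = (e2e3)^2 = (e3e1)^2 = -1,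
   e2e3 * e3e1 = e1e2, e3e1 * e1e2 = e2e3, e1e2 * e2e3 = e3e1
   (and the products in reverse order are the negatives).
   Spin(3) = the elements of norm 1 of this even subalgebra.            *)
Record Ev3 := mkEv3 { s0 : R; s12 : R; s23 : R; s31 : R }.

Definition ev3mul (u v : Ev3) : Ev3 :=
  let a1 := s0 u in let r1 := s12 u in let p1 := s23 u in let q1 := s31 u in
  let a2 := s0 v in let r2 := s12 v in let p2 := s23 v in let q2 := s31 v in
  (* i = e2e3, j = e3e1, k = e1e2 ; ij = k, jk = i, ki = j *)
  mkEv3 (a1*a2 - p1*p2 - q1*q2 - r1*r2)
        (a1*r2 + p1*q2 - q1*p2 + r1*a2)
        (a1*p2 + p1*a2 + q1*r2 - r1*q2)
        (a1*q2 - p1*r2 + q1*a2 + r1*p2).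

Definition inSpin3 (u : Ev3) : Prop :=
  s0 u * s0 u + s12 u * s12 u + s23 u * s23 u + s31 u * s31 u = 1.

Definition ev3dist (u v : Ev3) : R :=
  Rabs (s0 u - s0 v) + Rabs (s12 u - s12 v) + Rabs (s23 u - s23 v)
  + Rabs (s31 u - s31 v).

(* A common ambient type for the two possible rank-2 groups:
   AQ u    : an element u of the even Clifford algebra of R^3 (for Spin(3));
   AP x y  : a pair (x,y) (for Spin(2) x Spin(2)).                       *)
Inductive Amb : Type :=
| AQ : Ev3 -> Amb
| AP : C2 -> C2 -> Amb.

(* The group G(b): Spin(3) if b = true (edge), Spin(2) x Spin(2) otherwise. *)
Definition inG (b : bool) (z : Amb) : Prop :=
  match z with
  | AQ u => b = true /\ inSpin3 u
  | AP x y => b = false /\ inSpin2 x /\ inSpin2 y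
  end.

(* Group multiplication (componentwise for pairs); mixed products never
   occur inside a group G(b) and are given a junk value. *)
Definition amul (z w : Amb) : Amb :=
  match z, w with
  | AQ u, AQ v => AQ (ev3mul u v)
  | AP x y, AP x' y' => AP (c2mul x x') (c2mul y y')
  | _, _ => AQ (mkEv3 0 0 0 0)
  end.

Definition adist (z w : Amb) : R :=
  match z, w with
  | AQ u, AQ v => ev3dist u v
  | AP x y, AP x' y' => c2dist x x' + c2dist y y'
  | _, _ => 1
  end.

Definition eps12 (x : C2) : Amb := AQ (mkEv3 (fst x) (snd x) 0 0).
Definition eps23 (x : C2) : Amb := AQ (mkEv3 (fst x) 0 (snd x) 0).
Definition iota1 (x : C2) : Amb := AP x c2one.
Definition iota2 (x : C2) : Amb := AP c2one x.

Definition mono_into (b : bool) (f : C2 -> Amb) : Prop :=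
  (forall x, inSpin2 x -> inG b (f x)) /\
  (forall x y, inSpin2 x -> inSpin2 y -> f (c2mul x y) = amul (f x) (f y)) /\
  (forall x y, inSpin2 x -> inSpin2 y -> f x = f y -> x = y).

Definition cont_on_Spin2 (f : C2 -> Amb) : Prop :=
  forall x, inSpin2 x -> forall eps, eps > 0 ->
    exists delta, delta > 0 /\
      forall y, inSpin2 y -> c2dist x y < delta -> adist (f x) (f y) < eps.

Definition same_image (f g : C2 -> Amb) : Prop :=
  forall z, (exists x, inSpin2 x /\ f x = z) <-> (exists x, inSpin2 x /\ g x = z).

Definition group_iso (b b' : bool) (a : Amb -> Amb) : Prop :=
  (forall z, inG b z -> inG b' (a z)) /\
  (forall z w, inG b z -> inG b w -> a (amul z w) = amul (a z) (a w)) /\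
  (forall z w, inG b z -> inG b w -> a z = a w -> z = w) /\
  (forall w, inG b' w -> exists z, inG b z /\ a z = w).

(* I = {0, ..., n-1} with its natural order.
   e i j = true iff {i^sigma, j^sigma} is an edge of Pi.
   Groups are indexed by unordered pairs: G_ij = G_ji = G(e i j).
   phi i j (for i <> j) is the monomorphism phi^i_{ij} : Spin(2) -> G_ij;
   so for i < j, phi i j = phi^i_{ij} and phi j i = phi^j_{ij}. *)
Definition is_Spin2_amalgam (n : nat) (e : nat -> nat -> bool)
    (phi : nat -> nat -> C2 -> Amb) : Prop :=
  forall i j, (i < j)%nat -> (j < n)%nat ->
    mono_into (e i j) (phi i j) /\ mono_into (e i j) (phi j i) /\
    (if e i j then same_image (phi i j) eps12 /\ same_image (phi j i) eps23
     else same_image (phi i j) iota1 /\ same_image (phi j i) iota2).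

Definition continuous_amalgam (n : nat) (phi : nat -> nat -> C2 -> Amb) : Prop :=
  forall i j, (i < n)%nat -> (j < n)%nat -> i <> j -> cont_on_Spin2 (phi i j).

Definition std_amalgam (e : nat -> nat -> bool) (i j : nat) : C2 -> Amb :=
  if Nat.ltb i j then (if e i j then eps12 else iota1)
  else (if e j i then eps23 else iota2).

Definition is_perm (n : nat) (p : nat -> nat) : Prop :=
  (forall i, (i < n)%nat -> (p i < n)%nat) /\
  (forall i j, (i < n)%nat -> (j < n)%nat -> p i = p j -> i = j).

Definition amalgam_iso (n : nat) (e : nat -> nat -> bool)
    (phi psi : nat -> nat -> C2 -> Amb) : Prop :=
  exists (p : nat -> nat) (alpha : nat -> nat -> Amb -> Amb),
    is_perm n p /\
    forall i j, (i < j)%nat -> (j < n)%nat ->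
      group_iso (e i j) (e (p i) (p j)) (alpha i j) /\
      (forall x, inSpin2 x -> alpha i j (phi i j x) = psi (p i) (p j) x) /\
      (forall x, inSpin2 x -> alpha i j (phi j i x) = psi (p j) (p i) x).

(* A continuous injective endomorphism th of the circle Spin(2) fixes 1 and -1 and
   sends i to i or -i; composing with conjugation we may assume th i = i. Then th maps
   the open upper arc into itself (intermediate values and injectivity), so square
   roots force th to fix every expi (PI / 2^k), hence all dyadic angles, hence the
   whole circle by continuity. Thus each phi^i_ij is a standard embedding twisted by
   the identity or by conjugation of Spin(2); such twists extend to automorphisms of
   Spin(3) and of Spin(2) x Spin(2), which together with the identity permutation form
   an isomorphism onto the standard amalgam. *)

From Stdlib Require Import Reals Lra Lia ZArith Ranalysis5 IndefiniteDescription.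
Open Scope R_scope.

Definition conj2 (x : C2) : C2 := (fst x, - snd x).
Definition c2neg (x : C2) : C2 := (- fst x, - snd x).
Definition c2i : C2 := (0, 1).
Definition expi (t : R) : C2 := (cos t, sin t).

Lemma c2eq (x y : C2) : fst x = fst y -> snd x = snd y -> x = y.
Proof. destruct x, y; simpl; intros; subst; reflexivity. Qed.

Lemma inSpin2_mul x y : inSpin2 x -> inSpin2 y -> inSpin2 (c2mul x y).
Proof.
  destruct x as [a b], y as [c d]; unfold inSpin2, c2mul; simpl; intros Hx Hy.
  transitivity ((a * a + b * b) * (c * c + d * d)); [ring | rewrite Hx, Hy; ring].
Qed.

Lemma inSpin2_conj x : inSpin2 x -> inSpin2 (conj2 x).
Proof. destruct x as [a b]; unfold inSpin2, conj2; simpl; lra. Qed.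

Lemma inSpin2_one : inSpin2 c2one.
Proof. unfold inSpin2, c2one; simpl; lra. Qed.

Lemma inSpin2_neg x : inSpin2 x -> inSpin2 (c2neg x).
Proof. destruct x as [a b]; unfold inSpin2, c2neg; simpl; lra. Qed.

Lemma inSpin2_i : inSpin2 c2i.
Proof. unfold inSpin2, c2i; simpl; lra. Qed.

Lemma inSpin2_expi t : inSpin2 (expi t).
Proof. unfold inSpin2, expi; simpl. pose proof (sin2_cos2 t); unfold Rsqr in *; lra. Qed.

Lemma conj2K x : conj2 (conj2 x) = x.
Proof. apply c2eq; unfold conj2; simpl; ring. Qed.

Lemma conj2_mul x y : conj2 (c2mul x y) = c2mul (conj2 x) (conj2 y).
Proof. apply c2eq; unfold conj2, c2mul; simpl; ring. Qed.

Lemma c2mul_conj2 x : inSpin2 x -> c2mul x (conj2 x) = c2one.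
Proof. destruct x as [a b]; unfold inSpin2; simpl; intros H; apply c2eq; simpl; [rewrite <- H |]; ring. Qed.

Lemma c2dist_conj2 x y : c2dist (conj2 x) (conj2 y) = c2dist x y.
Proof.
  unfold c2dist, conj2; simpl.
  replace (- snd x - - snd y) with (- (snd x - snd y)) by ring.
  rewrite Rabs_Ropp; reflexivity.
Qed.

Lemma c2dist_triangle x y z : c2dist x z <= c2dist x y + c2dist y z.
Proof.
  unfold c2dist.
  pose proof (Rabs_triang (fst x - fst y) (fst y - fst z)).
  pose proof (Rabs_triang (snd x - snd y) (snd y - snd z)).
  replace (fst x - fst y + (fst y - fst z)) with (fst x - fst z) in * by ring.
  replace (snd x - snd y + (snd y - snd z)) with (snd x - snd z) in * by ring.
  lra.
Qed.

Lemma c2dist_sym x y : c2dist x y = c2dist y x.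
Proof. unfold c2dist; rewrite (Rabs_minus_sym (fst x)), (Rabs_minus_sym (snd x)); reflexivity. Qed.

Lemma c2dist_refl x : c2dist x x = 0.
Proof. unfold c2dist; unfold Rminus; rewrite !Rplus_opp_r, Rabs_R0; ring. Qed.

Lemma c2dist_arbitrarily_small x y :
  (forall eps, eps > 0 -> c2dist x y < eps) -> x = y.
Proof.
  intros Hsmall.
  pose proof (Rabs_pos (fst x - fst y)); pose proof (Rabs_pos (snd x - snd y)).
  apply c2eq; apply cond_eq; intros eps Heps; specialize (Hsmall eps Heps);
    unfold c2dist in Hsmall; lra.
Qed.

Lemma inSpin2_real x : inSpin2 x -> snd x = 0 -> x = c2one \/ x = c2neg c2one.
Proof.
  destruct x as [a b]; unfold inSpin2; simpl; intros H Hb; subst b.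
  assert (Ha : (a - 1) * (a + 1) = 0) by lra.
  destruct (Rmult_integral _ _ Ha); [left | right]; apply c2eq; simpl; lra.
Qed.

Lemma sqrt_one x : inSpin2 x -> c2mul x x = c2one -> x = c2one \/ x = c2neg c2one.
Proof.
  intros Hx Hsq; apply inSpin2_real; auto.
  destruct x as [a b]; unfold inSpin2, c2mul, c2one in *; simpl in *.
  injection Hsq; intros; nra.
Qed.

Lemma sqrt_unique x y : inSpin2 x -> inSpin2 y -> c2mul y y = c2mul x x ->
  y = x \/ y = c2neg x.
Proof.
  intros Hx Hy Hsq.
  set (w := c2mul y (conj2 x)).
  assert (Hw : inSpin2 w) by (apply inSpin2_mul, inSpin2_conj; auto).
  assert (Hww : c2mul w w = c2one).
  { transitivity (c2mul (c2mul y y) (c2mul (conj2 x) (conj2 x)));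
      [apply c2eq; unfold w, c2mul; simpl; ring |].
    rewrite Hsq, <- (c2mul_conj2 x Hx) at 1.
    apply c2eq; unfold c2mul, conj2, c2one; simpl.
    all: unfold inSpin2 in Hx; nra. }
  assert (Hy_w : y = c2mul w x).
  { unfold w. transitivity (c2mul y (c2mul x (conj2 x))).
    - rewrite c2mul_conj2 by auto. apply c2eq; unfold c2mul, c2one; simpl; ring.
    - apply c2eq; unfold c2mul; simpl; ring. }
  destruct (sqrt_one w Hw Hww) as [-> | ->]; rewrite Hy_w; [left | right];
    apply c2eq; unfold c2mul, c2one, c2neg; simpl; ring.
Qed.
Lemma expi_add s t : c2mul (expi s) (expi t) = expi (s + t).
Proof. unfold expi, c2mul; simpl. rewrite cos_plus, sin_plus. apply c2eq; simpl; ring. Qed.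

Lemma expi_0 : expi 0 = c2one.
Proof. unfold expi, c2one. rewrite cos_0, sin_0. reflexivity. Qed.

Lemma expi_PI : expi PI = c2neg c2one.
Proof. unfold expi, c2neg, c2one. rewrite cos_PI, sin_PI. apply c2eq; simpl; ring. Qed.

Lemma expi_PI2 : expi (PI / 2) = c2i.
Proof. unfold expi, c2i. rewrite cos_PI2, sin_PI2. reflexivity. Qed.

Lemma expi_continuous t eps : eps > 0 -> exists d, d > 0 /\
  forall s, Rabs (s - t) < d -> c2dist (expi t) (expi s) < eps.
Proof.
  intros He.
  pose proof (continuity_cos t) as Hc. pose proof (continuity_sin t) as Hs.
  unfold continuity_pt, continue_in, limit1_in, limit_in in Hc, Hs; simpl in Hc, Hs.
  destruct (Hc (eps / 2)) as [a1 [Ha1 Hc1]]; [lra |].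
  destruct (Hs (eps / 2)) as [a2 [Ha2 Hs1]]; [lra |].
  exists (Rmin a1 a2); split; [apply Rmin_pos; lra |].
  intros s Hst.
  destruct (Req_dec s t) as [-> | Hne]; [rewrite c2dist_refl; lra |].
  pose proof (Rmin_l a1 a2); pose proof (Rmin_r a1 a2).
  assert (D1 : R_dist (cos s) (cos t) < eps / 2)
    by (apply Hc1; repeat split; auto; unfold R_dist; lra).
  assert (D2 : R_dist (sin s) (sin t) < eps / 2)
    by (apply Hs1; repeat split; auto; unfold R_dist; lra).
  unfold R_dist in D1, D2. rewrite Rabs_minus_sym in D1, D2.
  unfold c2dist, expi; simpl; lra.
Qed.

Lemma expi_surjective x : inSpin2 x -> exists t, 0 <= t /\ expi t = x.
Proof.
  destruct x as [a b]; unfold inSpin2; simpl; intros H.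
  assert (Ha : -1 <= a <= 1) by nra.
  pose proof (acos_bound a). pose proof PI_RGT_0.
  assert (Hb2 : 1 - a² = b²) by (unfold Rsqr; lra).
  destruct (Rle_lt_dec 0 b) as [Hb | Hb].
  - exists (acos a); split; [lra |]. unfold expi.
    rewrite cos_acos, sin_acos, Hb2, sqrt_Rsqr by auto. reflexivity.
  - exists (2 * PI - acos a); split; [lra |]. unfold expi.
    rewrite cos_minus, sin_minus, cos_2PI, sin_2PI, cos_acos, sin_acos by auto.
    rewrite Hb2, Rsqr_neg, sqrt_Rsqr by lra. apply c2eq; simpl; ring.
Qed.

Lemma dyadic_multiples_dense t d : 0 <= t -> 0 < d ->
  exists k m, Rabs (INR m * (PI / 2 ^ k) - t) < d.
Proof.
  intros Ht Hd. pose proof PI_RGT_0.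
  assert (Hk : exists k, PI / 2 ^ k < d).
  { destruct (archimed (PI / d)) as [Hup _].
    assert (Hup0 : (0 <= up (PI / d))%Z)
      by (apply le_IZR; pose proof (Rdiv_lt_0_compat PI d); lra).
    exists (Z.to_nat (up (PI / d))).
    set (k := Z.to_nat (up (PI / d))).
    assert (Hkp : PI / d < 2 ^ k).
    { apply Rlt_le_trans with (INR k).
      - unfold k; rewrite INR_IZR_INZ, Z2Nat.id; auto.
      - clear; induction k as [| k IH]; [simpl; lra |].
        rewrite S_INR; change (2 ^ S k) with (2 * 2 ^ k).
        pose proof (pow_R1_Rle 2 k); lra. }
    pose proof (pow_lt 2 k).
    apply (Rmult_lt_reg_r (2 ^ k / d)); [apply Rdiv_lt_0_compat; lra |].
    replace (PI / 2 ^ k * (2 ^ k / d)) with (PI / d) by (field; lra).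
    replace (d * (2 ^ k / d)) with (2 ^ k) by (field; lra). lra. }
  destruct Hk as [k Hk]. set (h := PI / 2 ^ k) in *.
  assert (Hh : 0 < h) by (apply Rdiv_lt_0_compat; [lra | apply pow_lt; lra]).
  destruct (archimed (t / h)) as [Hv1 Hv2].
  assert (Hup0 : (0 <= up (t / h))%Z).
  { apply le_IZR. assert (0 <= t / h) by (apply Rmult_le_pos; auto with real). lra. }
  exists k, (Z.to_nat (up (t / h))).
  rewrite INR_IZR_INZ, Z2Nat.id by auto. fold h.
  replace t with (t / h * h) at 2 by (field; lra).
  assert (Hstep : 0 < (IZR (up (t / h)) - t / h) * h <= h).
  { split; [apply Rmult_lt_0_compat; lra |].
    nra. }
  replace (IZR (up (t / h)) * h - t / h * h) with ((IZR (up (t / h)) - t / h) * h) by ring.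
  rewrite Rabs_right; lra.
Qed.

Section ContinuousInjectiveEndomorphism.

Variable th : C2 -> C2.
Hypothesis th_spin : forall x, inSpin2 x -> inSpin2 (th x).
Hypothesis th_mul : forall x y, inSpin2 x -> inSpin2 y -> th (c2mul x y) = c2mul (th x) (th y).
Hypothesis th_inj : forall x y, inSpin2 x -> inSpin2 y -> th x = th y -> x = y.
Hypothesis th_cont : forall x, inSpin2 x -> forall eps, eps > 0 -> exists delta, delta > 0 /\
  forall y, inSpin2 y -> c2dist x y < delta -> c2dist (th x) (th y) < eps.

Lemma endo_one : th c2one = c2one.
Proof.
  assert (Hidem : th c2one = c2mul (th c2one) (th c2one)).
  { rewrite <- th_mul by apply inSpin2_one. f_equal.
    apply c2eq; unfold c2mul, c2one; simpl; ring. }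
  pose proof (th_spin c2one inSpin2_one) as Hs.
  destruct (th c2one) as [a b]; unfold inSpin2 in Hs; unfold c2mul in Hidem; simpl in *.
  injection Hidem; intros H2 H1.
  assert (b = 0) by nra; subst b.
  apply c2eq; unfold c2one; simpl; nra.
Qed.

Lemma endo_fixes_multiples h m : th (expi h) = expi h ->
  th (expi (INR m * h)) = expi (INR m * h).
Proof.
  intros Hh. induction m as [| m IH].
  - rewrite Rmult_0_l, expi_0. apply endo_one.
  - rewrite S_INR, Rmult_plus_distr_r, Rmult_1_l, <- expi_add, th_mul, IH, Hh
      by apply inSpin2_expi.
    reflexivity.
Qed.

Lemma endo_neg_one : th (c2neg c2one) = c2neg c2one.
Proof.
  pose proof (inSpin2_neg _ inSpin2_one) as Hm.
  assert (Hsq : c2mul (th (c2neg c2one)) (th (c2neg c2one)) = c2one).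
  { rewrite <- th_mul by auto. transitivity (th c2one); [f_equal | apply endo_one].
    apply c2eq; unfold c2mul, c2one, c2neg; simpl; ring. }
  destruct (sqrt_one _ (th_spin _ Hm) Hsq) as [Hone | Hneg]; auto.
  assert (Habsurd : c2neg c2one = c2one)
    by (apply th_inj; auto using inSpin2_one; rewrite Hone; symmetry; apply endo_one).
  unfold c2neg, c2one in Habsurd; injection Habsurd; intros; lra.
Qed.

Lemma endo_i : th c2i = c2i \/ th c2i = c2neg c2i.
Proof.
  apply sqrt_unique; auto using inSpin2_i.
  rewrite <- th_mul by apply inSpin2_i.
  replace (c2mul c2i c2i) with (c2neg c2one)
    by (apply c2eq; unfold c2mul, c2i, c2neg, c2one; simpl; ring).
  rewrite endo_neg_one. apply c2eq; unfold c2mul, c2i, c2neg, c2one; simpl; ring.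
Qed.

Lemma endo_expi_im_continuous a : continuity_pt (fun s => snd (th (expi s))) a.
Proof.
  unfold continuity_pt, continue_in, limit1_in, limit_in; simpl; unfold R_dist.
  intros eps He.
  destruct (th_cont (expi a) (inSpin2_expi a) eps He) as [d1 [Hd1 Hc]].
  destruct (expi_continuous a d1 Hd1) as [d [Hd Hd']].
  exists d; split; auto. intros x [_ Hx].
  specialize (Hc (expi x) (inSpin2_expi x) (Hd' x Hx)).
  unfold c2dist in Hc. rewrite Rabs_minus_sym.
  pose proof (Rabs_pos (fst (th (expi a)) - fst (th (expi x)))). lra.
Qed.

Lemma endo_expi_im_neq0 t : 0 < t < PI -> snd (th (expi t)) <> 0.
Proof.
  intros Ht Him.
  assert (Hsin : sin t > 0) by (apply sin_gt_0; lra).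
  destruct (inSpin2_real _ (th_spin _ (inSpin2_expi t)) Him) as [Hval | Hval];
    [rewrite <- endo_one in Hval | rewrite <- endo_neg_one in Hval];
    apply th_inj in Hval; auto using inSpin2_expi, inSpin2_one, inSpin2_neg;
    unfold expi, c2neg, c2one in Hval; injection Hval; intros; lra.
Qed.

Hypothesis th_i : th c2i = c2i.

(* Intermediate values: Im th(expi t) never vanishes on the open upper arc
   and equals 1 at t = PI/2. *)
Lemma endo_upper_half t : 0 < t < PI -> 0 < snd (th (expi t)).
Proof.
  intros Ht. pose proof PI_RGT_0.
  assert (Hmid : snd (th (expi (PI / 2))) = 1) by (rewrite expi_PI2, th_i; reflexivity).
  destruct (Rlt_le_dec 0 (snd (th (expi t)))) as [| Hle]; auto. exfalso.
  destruct (Req_dec (snd (th (expi t))) 0) as [Hz | Hnz];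
    [exact (endo_expi_im_neq0 t Ht Hz) |].
  destruct (total_order_T t (PI / 2)) as [[Hlt | ->] | Hgt]; [| lra |].
  - destruct (IVT_interv (fun s => snd (th (expi s))) t (PI / 2)) as [z [Hz Hz0]];
      auto using endo_expi_im_continuous; try lra.
    apply (endo_expi_im_neq0 z); auto; lra.
  - destruct (IVT_interv (fun s => - snd (th (expi s))) (PI / 2) t) as [z [Hz Hz0]];
      try lra.
    + intros; apply continuity_pt_opp, endo_expi_im_continuous.
    + apply (endo_expi_im_neq0 z); [lra | simpl in Hz0; lra].
Qed.

Lemma endo_fixes_dyadic k : th (expi (PI / 2 ^ k)) = expi (PI / 2 ^ k).
Proof.
  pose proof PI_RGT_0. induction k as [| k IH].
  - replace (PI / 2 ^ 0) with PI by (simpl; field). rewrite expi_PI. apply endo_neg_one.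
  - set (u := PI / 2 ^ S k).
    pose proof (pow_lt 2 k). pose proof (pow_R1_Rle 2 k).
    assert (Hu : 0 < u < PI).
    { unfold u; simpl. split; [apply Rdiv_lt_0_compat; lra |].
      apply (Rmult_lt_reg_r (2 * 2 ^ k)); [lra |].
      unfold Rdiv; rewrite Rmult_assoc, Rinv_l by lra. nra. }
    assert (Hsq : c2mul (th (expi u)) (th (expi u)) = c2mul (expi u) (expi u)).
    { rewrite <- th_mul, expi_add by apply inSpin2_expi.
      replace (u + u) with (PI / 2 ^ k) by (unfold u; simpl; field; lra).
      exact IH. }
    destruct (sqrt_unique _ _ (inSpin2_expi u) (th_spin _ (inSpin2_expi u)) Hsq)
      as [| Hneg]; auto.
    exfalso. pose proof (endo_upper_half u Hu) as Hup. rewrite Hneg in Hup.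
    pose proof (sin_gt_0 u ltac:(lra) ltac:(lra)). unfold c2neg, expi in Hup; simpl in Hup. lra.
Qed.

(* th agrees with the identity on the dense set of dyadic angles. *)
Lemma endo_fixes_all x : inSpin2 x -> th x = x.
Proof.
  intros Hx. destruct (expi_surjective x Hx) as [t [Ht <-]].
  apply c2dist_arbitrarily_small. intros eps He.
  destruct (th_cont (expi t) Hx (eps / 2)) as [d1 [Hd1 Hth]]; [lra |].
  destruct (expi_continuous t (Rmin d1 (eps / 2))) as [d [Hd Hexpi]];
    [apply Rmin_pos; lra |].
  destruct (dyadic_multiples_dense t d Ht Hd) as [k [m Hclose]].
  set (s := INR m * (PI / 2 ^ k)) in Hclose.
  specialize (Hexpi s Hclose).
  pose proof (Rmin_l d1 (eps / 2)); pose proof (Rmin_r d1 (eps / 2)).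
  specialize (Hth (expi s) (inSpin2_expi s) ltac:(lra)).
  assert (Hfix : th (expi s) = expi s)
    by exact (endo_fixes_multiples _ _ (endo_fixes_dyadic k)).
  rewrite Hfix in Hth.
  pose proof (c2dist_triangle (th (expi t)) (expi s) (expi t)).
  rewrite (c2dist_sym (expi s)) in *. lra.
Qed.

End ContinuousInjectiveEndomorphism.

Definition circle_aut (b : bool) (x : C2) : C2 := if b then x else conj2 x.

Lemma inSpin2_circle_aut b x : inSpin2 x -> inSpin2 (circle_aut b x).
Proof. destruct b; simpl; auto using inSpin2_conj. Qed.

Lemma circle_autK b x : circle_aut b (circle_aut b x) = x.
Proof. destruct b; simpl; auto using conj2K. Qed.

Lemma circle_aut_mul b x y : circle_aut b (c2mul x y) = c2mul (circle_aut b x) (circle_aut b y).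
Proof. destruct b; simpl; auto using conj2_mul. Qed.

Lemma circle_aut_one b : circle_aut b c2one = c2one.
Proof. destruct b; [reflexivity |]. apply c2eq; simpl; ring. Qed.

Lemma cont_inj_endo_classification (th : C2 -> C2) :
  (forall x, inSpin2 x -> inSpin2 (th x)) ->
  (forall x y, inSpin2 x -> inSpin2 y -> th (c2mul x y) = c2mul (th x) (th y)) ->
  (forall x y, inSpin2 x -> inSpin2 y -> th x = th y -> x = y) ->
  (forall x, inSpin2 x -> forall eps, eps > 0 -> exists delta, delta > 0 /\
     forall y, inSpin2 y -> c2dist x y < delta -> c2dist (th x) (th y) < eps) ->
  exists b, forall x, inSpin2 x -> th x = circle_aut b x.
Proof.
  intros Hspin Hmul Hinj Hcont.
  destruct (endo_i th Hspin Hmul Hinj) as [Hi | Hi].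
  - exists true. exact (endo_fixes_all th Hspin Hmul Hinj Hcont Hi).
  - exists false. intros x Hx. simpl.
    rewrite <- (conj2K (th x)). f_equal. revert x Hx.
    apply (endo_fixes_all (fun x => conj2 (th x))).
    + auto using inSpin2_conj.
    + intros; rewrite Hmul by auto; apply conj2_mul.
    + intros x y Hx Hy Hxy. apply Hinj; auto.
      rewrite <- (conj2K (th x)), Hxy, conj2K; reflexivity.
    + intros x Hx eps He. destruct (Hcont x Hx eps He) as [d [Hd Hc]].
      exists d; split; auto; intros; rewrite c2dist_conj2; auto.
    + rewrite Hi. apply c2eq; unfold conj2, c2neg, c2i; simpl; ring.
Qed.

Definition isometric_embedding (emb : C2 -> Amb) (proj : Amb -> C2) : Prop :=
  (forall x, proj (emb x) = x) /\
  (forall x y, amul (emb x) (emb y) = emb (c2mul x y)) /\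
  (forall x y, adist (emb x) (emb y) = c2dist x y).

Lemma cont_mono_same_image (b : bool) (f emb : C2 -> Amb) (proj : Amb -> C2) :
  isometric_embedding emb proj -> mono_into b f -> same_image f emb -> cont_on_Spin2 f ->
  exists c, forall x, inSpin2 x -> f x = emb (circle_aut c x).
Proof.
  intros [Hproj [Hmul Hdist]] [_ [Mmul Minj]] Himg Hcont.
  assert (Hfact : forall x, inSpin2 x -> inSpin2 (proj (f x)) /\ f x = emb (proj (f x))).
  { intros x Hx.
    destruct (proj1 (Himg (f x)) (ex_intro _ x (conj Hx eq_refl))) as [y [Hy <-]].
    rewrite Hproj. auto. }
  destruct (cont_inj_endo_classification (fun x => proj (f x))) as [c Hc].
  - intros; apply Hfact; auto.
  - intros x y Hx Hy.
    rewrite Mmul, (proj2 (Hfact x Hx)), (proj2 (Hfact y Hy)), Hmul, !Hproj by auto.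
    reflexivity.
  - intros x y Hx Hy Hxy. apply Minj; auto.
    rewrite (proj2 (Hfact x Hx)), (proj2 (Hfact y Hy)), Hxy; reflexivity.
  - intros x Hx eps He. destruct (Hcont x Hx eps He) as [d [Hd Hd']].
    exists d; split; auto. intros y Hy Hxy. specialize (Hd' y Hy Hxy).
    rewrite (proj2 (Hfact x Hx)), (proj2 (Hfact y Hy)), Hdist in Hd'. exact Hd'.
  - exists c. intros x Hx. rewrite <- Hc by auto. apply Hfact; auto.
Qed.

Definition proj12 (z : Amb) : C2 := match z with AQ u => (s0 u, s12 u) | _ => c2one end.
Definition proj23 (z : Amb) : C2 := match z with AQ u => (s0 u, s23 u) | _ => c2one end.
Definition projP1 (z : Amb) : C2 := match z with AP x _ => x | _ => c2one end.
Definition projP2 (z : Amb) : C2 := match z with AP _ y => y | _ => c2one end.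

Lemma c2mul_one : c2mul c2one c2one = c2one.
Proof. apply c2eq; unfold c2mul, c2one; simpl; ring. Qed.

Lemma isometric_eps12 : isometric_embedding eps12 proj12.
Proof.
  repeat split; intros [a b]; [reflexivity | intros [c d] ..].
  - unfold eps12, amul, ev3mul, c2mul; simpl; f_equal; f_equal; ring.
  - unfold eps12, adist, ev3dist, c2dist; simpl.
    unfold Rminus; rewrite Rplus_opp_r, Rabs_R0; ring.
Qed.

Lemma isometric_eps23 : isometric_embedding eps23 proj23.
Proof.
  repeat split; intros [a b]; [reflexivity | intros [c d] ..].
  - unfold eps23, amul, ev3mul, c2mul; simpl; f_equal; f_equal; ring.
  - unfold eps23, adist, ev3dist, c2dist; simpl.
    unfold Rminus; rewrite Rplus_opp_r, Rabs_R0; ring.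
Qed.

Lemma isometric_iota1 : isometric_embedding iota1 projP1.
Proof.
  repeat split; intros.
  - unfold iota1, amul; rewrite c2mul_one; reflexivity.
  - unfold iota1, adist; rewrite c2dist_refl; ring.
Qed.

Lemma isometric_iota2 : isometric_embedding iota2 projP2.
Proof.
  repeat split; intros.
  - unfold iota2, amul; rewrite c2mul_one; reflexivity.
  - unfold iota2, adist; rewrite c2dist_refl; ring.
Qed.

Lemma group_iso_involution b (a : Amb -> Amb) :
  (forall z, inG b z -> inG b (a z)) ->
  (forall z w, inG b z -> inG b w -> a (amul z w) = amul (a z) (a w)) ->
  (forall z, a (a z) = z) -> group_iso b b a.
Proof.
  intros Hin Hmul Hinv. repeat split; auto.
  - intros z w _ _ Hzw. rewrite <- (Hinv z), Hzw, Hinv; reflexivity.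
  - intros w Hw. exists (a w); split; auto.
Qed.

Definition sign_if (b : bool) (r : R) : R := if b then r else - r.

(* For (b1, b2) = (false, true), (true, false), (false, false) this is conjugation
   by e2e3, e1e2, e3e1 respectively, an inner automorphism of Spin(3). *)
Definition spin3_twist (b1 b2 : bool) (z : Amb) : Amb :=
  match z with
  | AQ u => AQ (mkEv3 (s0 u) (sign_if b1 (s12 u)) (sign_if b2 (s23 u))
                      (sign_if b1 (sign_if b2 (s31 u))))
  | AP x y => AP x y
  end.

Definition torus_twist (b1 b2 : bool) (z : Amb) : Amb :=
  match z with
  | AQ u => AQ u
  | AP x y => AP (circle_aut b1 x) (circle_aut b2 y)
  end.

Lemma spin3_twist_iso b b1 b2 : group_iso b b (spin3_twist b1 b2).
Proof.
  apply group_iso_involution.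
  - intros [[a r p q] | x y]; simpl; auto. intros [Hb Hs]; split; auto.
    unfold inSpin3 in *; simpl in *. destruct b1, b2; simpl; rewrite <- Hs; ring.
  - intros [[a r p q] | x y] [[a' r' p' q'] | x' y']; simpl; intros H1 H2;
      try (destruct H1 as [H1 _]; destruct H2 as [H2 _]; congruence); auto.
    unfold ev3mul; simpl. destruct b1, b2; simpl; f_equal; f_equal; ring.
  - intros [[a r p q] | x y]; simpl; auto. destruct b1, b2; simpl; f_equal; f_equal; ring.
Qed.

Lemma torus_twist_iso b b1 b2 : group_iso b b (torus_twist b1 b2).
Proof.
  apply group_iso_involution.
  - intros [u | x y]; simpl; auto. intros [Hb [Hx Hy]].
    auto using inSpin2_circle_aut.
  - intros [u | x y] [u' | x' y']; simpl; intros H1 H2;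
      try (destruct H1 as [H1 _]; destruct H2 as [H2 _]; congruence); auto.
    rewrite !circle_aut_mul; reflexivity.
  - intros [u | x y]; simpl; auto. rewrite !circle_autK; reflexivity.
Qed.

Lemma spin3_twist_eps12 b1 b2 x : spin3_twist b1 b2 (eps12 (circle_aut b1 x)) = eps12 x.
Proof.
  destruct x as [a b]; destruct b1, b2; unfold eps12, circle_aut, conj2; simpl;
    f_equal; f_equal; ring.
Qed.

Lemma spin3_twist_eps23 b1 b2 x : spin3_twist b1 b2 (eps23 (circle_aut b2 x)) = eps23 x.
Proof.
  destruct x as [a b]; destruct b1, b2; unfold eps23, circle_aut, conj2; simpl;
    f_equal; f_equal; ring.
Qed.

Lemma torus_twist_iota1 b1 b2 x : torus_twist b1 b2 (iota1 (circle_aut b1 x)) = iota1 x.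
Proof. unfold iota1; simpl. rewrite circle_autK, circle_aut_one; reflexivity. Qed.

Lemma torus_twist_iota2 b1 b2 x : torus_twist b1 b2 (iota2 (circle_aut b2 x)) = iota2 x.
Proof. unfold iota2; simpl. rewrite circle_autK, circle_aut_one; reflexivity. Qed.

Lemma rank2_amalgam_standard (b : bool) (f g : C2 -> Amb) :
  mono_into b f -> mono_into b g -> cont_on_Spin2 f -> cont_on_Spin2 g ->
  (if b then same_image f eps12 /\ same_image g eps23
   else same_image f iota1 /\ same_image g iota2) ->
  exists a, group_iso b b a /\
    (forall x, inSpin2 x -> a (f x) = (if b then eps12 else iota1) x) /\
    (forall x, inSpin2 x -> a (g x) = (if b then eps23 else iota2) x).
Proof.
  intros Hf Hg Cf Cg Himg. destruct b; destruct Himg as [If Ig].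
  - destruct (cont_mono_same_image _ _ _ _ isometric_eps12 Hf If Cf) as [c1 Hc1].
    destruct (cont_mono_same_image _ _ _ _ isometric_eps23 Hg Ig Cg) as [c2 Hc2].
    exists (spin3_twist c1 c2). split; [apply spin3_twist_iso |].
    split; intros x Hx; [rewrite Hc1 | rewrite Hc2];
      auto using spin3_twist_eps12, spin3_twist_eps23.
  - destruct (cont_mono_same_image _ _ _ _ isometric_iota1 Hf If Cf) as [c1 Hc1].
    destruct (cont_mono_same_image _ _ _ _ isometric_iota2 Hg Ig Cg) as [c2 Hc2].
    exists (torus_twist c1 c2). split; [apply torus_twist_iso |].
    split; intros x Hx; [rewrite Hc1 | rewrite Hc2];
      auto using torus_twist_iota1, torus_twist_iota2.
Qed.

Lemma std_amalgam_lt (e : nat -> nat -> bool) i j : (i < j)%nat ->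
  std_amalgam e i j = (if e i j then eps12 else iota1) /\
  std_amalgam e j i = (if e i j then eps23 else iota2).
Proof.
  intros Hij. unfold std_amalgam.
  rewrite (proj2 (Nat.ltb_lt i j) Hij), (proj2 (Nat.ltb_ge j i)) by lia.
  destruct (e i j); auto.
Qed.

Theorem mainTheorem7
  (V : Type) (E : V -> V -> bool)
  (HEsym : forall u v, E u v = E v u)
  (HEirr : forall v, E v v = false)
  (n : nat) (sigma : nat -> V)
  (Hsig_inj : forall i j, (i < n)%nat -> (j < n)%nat -> sigma i = sigma j -> i = j)
  (Hsig_surj : forall v, exists i, (i < n)%nat /\ sigma i = v)
  (phi : nat -> nat -> C2 -> Amb)
  (Hamal : is_Spin2_amalgam n (fun i j => E (sigma i) (sigma j)) phi)
  (Hcont : continuous_amalgam n phi) :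
  amalgam_iso n (fun i j => E (sigma i) (sigma j)) phi
    (std_amalgam (fun i j => E (sigma i) (sigma j))).
Proof.
  set (e := fun i j => E (sigma i) (sigma j)).
  assert (Hpair : forall ij : nat * nat, exists a : Amb -> Amb,
    let i := fst ij in let j := snd ij in (i < j)%nat -> (j < n)%nat ->
      group_iso (e i j) (e i j) a /\
      (forall x, inSpin2 x -> a (phi i j x) = std_amalgam e i j x) /\
      (forall x, inSpin2 x -> a (phi j i x) = std_amalgam e j i x)).
  { intros [i j]; simpl.
    destruct (lt_dec i j) as [Hij | Hij]; [| exists (fun z => z); lia].
    destruct (lt_dec j n) as [Hjn | Hjn]; [| exists (fun z => z); lia].
    destruct (Hamal i j Hij Hjn) as [Mi [Mj Himg]].
    destruct (std_amalgam_lt e i j Hij) as [-> ->].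
    destruct (rank2_amalgam_standard _ _ _ Mi Mj
                (Hcont i j ltac:(lia) Hjn ltac:(lia)) (Hcont j i Hjn ltac:(lia) ltac:(lia))
                Himg) as [a Ha].
    exists a. intros _ _. exact Ha. }
  destruct (functional_choice _ Hpair) as [alpha Halpha].
  exists (fun i => i), (fun i j => alpha (i, j)). split.
  - split; auto.
  - intros i j Hij Hjn. exact (Halpha (i, j) Hij Hjn).
Qed.
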